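(* Let $G$ be a finite group, $K\unlhd H\le G$ with $H/K$ cyclic, and $\psi$ a linear character of $H$ with kernel $K$. Suppose there are a normal subgroup $A$ of $G$ and a subgroup $L$ of $G$ with $A\le H\le L$, such that $\psi_A$ is invariant in $L$ and $L\unlhd N_G(\ker\psi_A)$. Then: (i) if $\psi^L$ is irreducible, the distinct $G$-conjugates of $e_{\mathbb{Q}}(\psi^L)$ are mutually orthogonal; (ii) if $\psi^G$ is irreducible, then $e_{\mathbb{Q}}(\psi^G)$ is the sum of all distinct $G$-conjugates of $e_{\mathbb{Q}}(\psi^L)$, and $$\alpha_{(G,H,K)}=\alpha_{(L,H,K)}\frac{[\operatorname{Cen}_G(\varepsilon(H,K)):\operatorname{Cen}_L(\varepsilon(H,K))]}{[\operatorname{Cen}_G(e(L,H,K)):L]}.$$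
   Context: For $\chi\in\operatorname{Irr}M$, $e_{\mathbb{Q}}(\chi)=\frac{\chi(1)}{|M|}\sum_{\sigma\in\operatorname{Gal}(\mathbb{Q}(\chi)/\mathbb{Q})}\sum_{g\in M}\sigma(\chi(g))g^{-1}$, a primitive central idempotent of $\mathbb{Q}M$. $\psi_A$ is the restriction, $\psi^L,\psi^G$ induced characters; a character $\lambda$ of $A$ is invariant in $L$ if $\lambda(xax^{-1})=\lambda(a)$ for all $x\in L,a\in A$. $\operatorname{Cen}_G(a)$ is the centralizer of $a\in\mathbb{Q}G$ in $G$. For $K\unlhd H\le M$: $\widehat H=\frac1{|H|}\sum_{h\in H}h$; $\varepsilon(H,K)=\widehat K$ if $H=K$, else $\prod(\widehat K-\widehat L')$ over $L'\unlhd H$ with $L'/K$ minimal normal in $H/K$; $e(M,H,K)$ is the sum of the distinct $M$-conjugates of $\varepsilon(H,K)$. A Shoda pair of $M$ is $(H,K)$ with $K\unlhd H\le M$, $H/K$ cyclic, and $g\in M$, $[H,g]\cap H\subseteq K$ imply $g\in H$ (equivalently, $\psi^M$ is irreducible for a linear $\psi$ on $H$ with kernel $K$); then $\alpha_{(M,H,K)}$ denotes the unique rational number with $\alpha_{(M,H,K)}e(M,H,K)$ a primitive central idempotent of $\mathbb{Q}M$ (namely $e_{\mathbb{Q}}(\psi^M)$). *)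

From HB Require Import structures.
From mathcomp Require Import all_boot all_order all_algebra all_fingroup.
From mathcomp Require Import all_solvable all_field all_character.
From Stdlib Require Import ClassicalEpsilon.
Set Implicit Arguments. Unset Strict Implicit. Unset Printing Implicit Defensive.
Import Order.TTheory GRing.Theory Num.Theory.
Local Open Scope ring_scope.

Definition decP (P : Prop) : bool :=
  if excluded_middle_informative P then true else false.

(* Elements of the group algebra C[gT] (containing Q[M] for every M <= gT):
   a = \sum_g a(g) g, represented by its coefficient function. *)
Notation galg gT := {ffun gT -> algC}.

Section GroupAlgebra.
Variable gT : finGroupType.

Definition ga_of (g : gT) : galg gT := [ffun h => (h == g)%:R].

Definition ga_mul (a b : galg gT) : galg gT :=
  [ffun g => \sum_(h : gT) a h * b (h^-1 * g)%g].

Definition ga_scale (c : algC) (a : galg gT) : galg gT := [ffun g => c * a g].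

Definition ga_one : galg gT := ga_of 1%g.

(* Conjugation x a x^-1 (coefficient of g is a(x^-1 g x) = a(g ^ x)). *)
Definition ga_conj (x : gT) (a : galg gT) : galg gT := [ffun g => a (g ^ x)%g].

Definition ga_hat (H : {set gT}) : galg gT :=
  [ffun g => if g \in H then (#|H|%:R)^-1 else 0].

Definition ga_cen (M : {set gT}) (a : galg gT) : {set gT} :=
  [set g in M | ga_conj g a == a].

(* L'/K is a minimal normal subgroup of H/K (L' normal in H). *)
Definition minnormal_over (H K L' : {set gT}) : bool :=
  [&& group_set L', (L' <| H)%g, K \proper L' &
   [forall N : {set gT},
      [&& group_set N, (N <| H)%g, K \subset N & N \subset L'] ==>
      (N == K) || (N == L')]].

Definition eps (H K : {set gT}) : galg gT :=
  if H == K then ga_hat K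
  else \big[ga_mul/ga_one]_(L' : {set gT} | minnormal_over H K L')
          (ga_hat K - ga_hat L').

Definition conj_sum (M : {set gT}) (a : galg gT) : galg gT :=
  \sum_(b <- undup [seq ga_conj x a | x <- enum M]) b.

Definition eMHK (M H K : {set gT}) : galg gT := conj_sum M (eps H K).

(* The distinct Galois conjugates chi^sigma, sigma in Gal(Q(chi)/Q), of an
   irreducible character chi of M: these are exactly the irreducible
   characters of the form cfAut u chi, u an automorphism of algC. *)
Definition gal_conjs (M : {group gT}) (chi : 'CF(M)) : seq 'CF(M) :=
  [seq phi <- irr M | decP (exists u : {rmorphism algC -> algC},
                                phi = cfAut u chi)].

Definition eQ (M : {group gT}) (chi : 'CF(M)) : galg gT :=
  [ffun g => if g \in M then
     chi 1%g / #|M|%:R * \sum_(phi <- gal_conjs chi) phi (g^-1)%g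
   else 0].

End GroupAlgebra.

From Pilot Require Import Defs.
From HB Require Import structures.
From mathcomp Require Import all_boot all_order all_algebra all_fingroup.
From mathcomp Require Import all_solvable all_field all_character.
From mathcomp Require Import ring.
Set Implicit Arguments. Unset Strict Implicit. Unset Printing Implicit Defensive.
Import Order.TTheory GRing.Theory Num.Theory.
Local Open Scope ring_scope.

(* Let e(phi) = phi(1)/|M| sum_g phi(g^-1) g be the central primitive idempotent
   of C[M] attached to phi in Irr M, so that e_Q(chi) is the sum of the e(phi)
   over the Galois conjugates phi of chi, and put theta = psi^L.
   (i) Let z in G. If z normalises ker psi_A, it normalises L, so e_Q(theta)^z
   = e_Q(theta^z), and two rational idempotents of C[L] are equal or
   orthogonal. Otherwise some a in ker psi_A has a^z outside ker psi_A; as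
   psi_A is L-invariant, every Galois conjugate of theta transforms under
   translation by A through a Galois conjugate of psi_A, and translating by a
   multiplies e_Q(theta) e_Q(theta)^z by a root of unity different from 1.
   (ii) By (i) the sum S of the G-conjugates of e_Q(theta) is idempotent.
   Averaging e(phi) over G gives |L| e(phi^G), so S is a combination with
   positive coefficients of the e(chi'), chi' Galois conjugate to chi = psi^G;
   idempotency forces every coefficient to be 1, i.e. S = e_Q(chi). The
   formula for alpha follows by evaluating both normalisations at 1. *)

Section GroupAlgebra.
Variable gT : finGroupType.
Implicit Types (a b c : galg gT) (x y g h : gT).

Lemma ga_scaleE k a g : ga_scale k a g = k * a g.
Proof. by rewrite ffunE. Qed.

Lemma ga_scaleA k l a : ga_scale k (ga_scale l a) = ga_scale (k * l) a.
Proof. by apply/ffunP => g; rewrite !ffunE mulrA. Qed.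

Lemma ga_scale1 a : ga_scale 1 a = a.
Proof. by apply/ffunP => g; rewrite ffunE mul1r. Qed.

Lemma ga_scale_nat n a : a *+ n = ga_scale n%:R a.
Proof. by apply/ffunP => g; rewrite ffunMnE ffunE mulr_natl. Qed.

Lemma ga_scale_sum k I (r : seq I) (P : pred I) (F : I -> galg gT) :
  ga_scale k (\sum_(i <- r | P i) F i) = \sum_(i <- r | P i) ga_scale k (F i).
Proof.
apply/ffunP => g; rewrite ffunE !sum_ffunE big_distrr.
by apply: eq_bigr => i _; rewrite ffunE.
Qed.

Lemma ga_scaleK k : k != 0 -> cancel (@ga_scale gT k) (@ga_scale gT k^-1).
Proof. by move=> nz_k a; apply/ffunP => g; rewrite !ffunE mulKf. Qed.

Lemma ga_scale_inj k : k != 0 -> injective (@ga_scale gT k).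
Proof. by move=> nz_k; apply: can_inj (ga_scaleK nz_k). Qed.

Lemma ga_conjM x y a : ga_conj x (ga_conj y a) = ga_conj (x * y)%g a.
Proof. by apply/ffunP => g; rewrite !ffunE conjgM. Qed.

Lemma ga_conj1 a : ga_conj 1%g a = a.
Proof. by apply/ffunP => g; rewrite !ffunE conjg1. Qed.

Lemma ga_conj_sum x I (r : seq I) (P : pred I) (F : I -> galg gT) :
  ga_conj x (\sum_(i <- r | P i) F i) = \sum_(i <- r | P i) ga_conj x (F i).
Proof.
apply/ffunP => g; rewrite ffunE !sum_ffunE.
by apply: eq_bigr => i _; rewrite ffunE.
Qed.

Lemma ga_conjZ x k a : ga_conj x (ga_scale k a) = ga_scale k (ga_conj x a).
Proof. by apply/ffunP => g; rewrite !ffunE. Qed.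

Lemma ga_conj_mul x a b :
  ga_conj x (ga_mul a b) = ga_mul (ga_conj x a) (ga_conj x b).
Proof.
apply/ffunP => g; rewrite !ffunE (reindex_inj (@conjg_inj _ x)) /=.
by apply: eq_bigr => h _; rewrite !ffunE conjMg conjVg.
Qed.

Lemma ga_mul_suml I (r : seq I) (P : pred I) (F : I -> galg gT) b :
  ga_mul (\sum_(i <- r | P i) F i) b = \sum_(i <- r | P i) ga_mul (F i) b.
Proof.
apply/ffunP => g; rewrite ffunE sum_ffunE.
under eq_bigr do rewrite sum_ffunE big_distrl.
by rewrite exchange_big; apply: eq_bigr => i _; rewrite ffunE.
Qed.

Lemma ga_mul_sumr I (r : seq I) (P : pred I) (F : I -> galg gT) a :
  ga_mul a (\sum_(i <- r | P i) F i) = \sum_(i <- r | P i) ga_mul a (F i).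
Proof.
apply/ffunP => g; rewrite ffunE sum_ffunE.
under eq_bigr do rewrite sum_ffunE big_distrr.
by rewrite exchange_big; apply: eq_bigr => i _; rewrite ffunE.
Qed.

Lemma ga_mulZl k a b : ga_mul (ga_scale k a) b = ga_scale k (ga_mul a b).
Proof.
apply/ffunP => g; rewrite !ffunE big_distrr.
by apply: eq_bigr => h _; rewrite !ffunE -mulrA.
Qed.

Lemma ga_mulZr k a b : ga_mul a (ga_scale k b) = ga_scale k (ga_mul a b).
Proof.
apply/ffunP => g; rewrite !ffunE big_distrr.
by apply: eq_bigr => h _; rewrite !ffunE mulrCA.
Qed.

Lemma ga_mulA a b c : ga_mul (ga_mul a b) c = ga_mul a (ga_mul b c).
Proof.
apply/ffunP => g; rewrite !ffunE.
under eq_bigr do rewrite ffunE big_distrl.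
rewrite exchange_big; apply: eq_bigr => k _ /=.
rewrite ffunE big_distrr (reindex_inj (mulgI k)) /=.
apply: eq_bigr => h _; rewrite -mulrA; congr (_ * (_ * _)).
  by rewrite mulKg.
by rewrite invMg -mulgA.
Qed.

Lemma ga_mul_comm (M : {set gT}) a b :
  (forall x g, x \in M -> a (g ^ x)%g = a g) ->
  (forall g, g \notin M -> b g = 0) -> ga_mul a b = ga_mul b a.
Proof.
move=> aJ b_out; apply/ffunP => g; rewrite !ffunE.
rewrite (reindex_inj (inj_comp (mulgI g) (@invg_inj _))) /=.
apply: eq_bigr => h _; rewrite invMg invgK -mulgA mulVg mulg1 mulrC.
have [Mh | notMh] := boolP (h \in M); last by rewrite b_out // !mul0r.
by rewrite -(aJ h) // conjgE mulgKV.
Qed.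

Lemma ga_mul_idem_scale_eq1 f b r :
  ga_mul f f = f -> ga_mul b b = b -> ga_mul b f = ga_mul f b ->
  f != 0 -> r != 0 -> ga_mul f b = ga_scale r f -> r = 1.
Proof.
move=> ff bb bf nz_f nz_r fb.
have: ga_mul (ga_mul f b) (ga_mul f b) = ga_mul f b.
  by rewrite ga_mulA -(ga_mulA b) bf !ga_mulA bb -ga_mulA ff.
rewrite fb ga_mulZl ga_mulZr ga_scaleA ff => rrf.
have [g nz_fg] : exists g, f g != 0.
  apply/existsP; apply: contraNT nz_f => /existsPn f0.
  by apply/eqP/ffunP => g; rewrite ffunE; apply/eqP/negbNE/f0.
have /eqP := congr1 (fun c => c g) rrf; rewrite /= !ga_scaleE -subr_eq0 -mulrBl.
rewrite mulf_eq0 (negPf nz_fg) orbF subr_eq0 => /eqP rr.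
by apply: (mulfI nz_r); rewrite rr mulr1.
Qed.

Lemma ga_cen1 (M : {group gT}) a : 1%g \in ga_cen M a.
Proof. by rewrite inE group1 ga_conj1 eqxx. Qed.

Lemma ga_cen_neq0 (M : {group gT}) a : #|ga_cen M a|%:R != 0 :> algC.
Proof.
by rewrite pnatr_eq0 -lt0n card_gt0; apply/set0Pn; exists 1%g; rewrite ga_cen1.
Qed.

Lemma ga_cenZ (M : {group gT}) k a : k != 0 -> ga_cen M (ga_scale k a) = ga_cen M a.
Proof.
by move=> nz_k; apply/setP => x; rewrite !inE ga_conjZ (inj_eq (ga_scale_inj nz_k)).
Qed.

Lemma card_ga_conj_fiber (M : {group gT}) a x0 : x0 \in M ->
  #|M :&: [set x | ga_conj x a == ga_conj x0 a]| = #|ga_cen M a|.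
Proof.
move=> Mx0; rewrite -(card_imset _ (mulgI x0)).
apply: eq_card => x; apply/idP/imsetP.
  move=> /setIP [Mx]; rewrite inE => /eqP ax; exists (x0^-1 * x)%g.
    by rewrite inE groupM ?groupV // -ga_conjM ax ga_conjM mulVg ga_conj1 eqxx.
  by rewrite mulKVg.
move=> [c]; rewrite inE => /andP [Mc /eqP ac] ->.
by rewrite inE groupM // inE -ga_conjM ac eqxx.
Qed.

Lemma mem_conj_seq (M : {group gT}) a b :
  b \in undup [seq ga_conj x a | x <- enum M] ->
  exists2 x, x \in M & b = ga_conj x a.
Proof. by rewrite mem_undup => /mapP [x]; rewrite mem_enum => Mx ->; exists x. Qed.

Lemma sum_ga_conj (M : {group gT}) a :
  \sum_(x in M) ga_conj x a = ga_scale #|ga_cen M a|%:R (conj_sum M a).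
Proof.
rewrite /conj_sum ga_scale_sum -big_enum /=.
rewrite -(big_map (fun x => ga_conj x a) predT id).
rewrite -big_undup_iterop_count; apply: eq_big_seq => b.
rewrite mem_undup => /mapP [x0]; rewrite mem_enum => Mx0 ->.
rewrite Monoid.iteropE iter_addr_0 ga_scale_nat; congr (ga_scale _%:R _).
rewrite count_map -(card_ga_conj_fiber a Mx0) cardE (perm_size (enum_setI _ _)).
by rewrite size_filter; apply: eq_count => x /=; rewrite !inE.
Qed.

Lemma conj_sum1 (M : {group gT}) a :
  conj_sum M a 1%g = #|M|%:R / #|ga_cen M a|%:R * a 1%g.
Proof.
have := congr1 (fun f : galg gT => f 1%g) (sum_ga_conj M a).
rewrite sum_ffunE ffunE /=.
under eq_bigr do rewrite ffunE conj1g.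
rewrite sumr_const -[a 1%g *+ _]mulr_natl => E.
have nz_cen := ga_cen_neq0 M a.
by apply: (mulfI nz_cen); rewrite -E; field.
Qed.

Lemma conj_sum_idem (M : {group gT}) a :
  ga_mul a a = a ->
  (forall x y, x \in M -> y \in M -> ga_conj x a != ga_conj y a ->
     ga_mul (ga_conj x a) (ga_conj y a) = 0) ->
  ga_mul (conj_sum M a) (conj_sum M a) = conj_sum M a.
Proof.
move=> aa orth; rewrite {1}/conj_sum ga_mul_suml; apply: eq_big_seq => b b_conj.
rewrite ga_mul_sumr; have [x Mx ->] := mem_conj_seq b_conj.
rewrite (bigD1_seq (ga_conj x a)) ?undup_uniq //=; last first.
  by rewrite mem_undup; apply/mapP; exists x; rewrite ?mem_enum.
rewrite -ga_conj_mul aa big1_seq ?addr0 // => b' /andP[ne /mem_conj_seq[y My eb']].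
by rewrite eb' eq_sym in ne *; apply: orth.
Qed.

Lemma conj_sum_out (M : {group gT}) a g :
  (forall h, h \notin M -> a h = 0) -> g \notin M -> conj_sum M a g = 0.
Proof.
move=> a_out notMg; rewrite sum_ffunE big1_seq // => b.
move=> /andP[_ /mem_conj_seq[x Mx ->]].
by rewrite ffunE a_out // groupJr.
Qed.

Lemma conj_sum_scale_ratio (G L : {group gT}) a b (kG kL : algC) :
  b 1%g != 0 ->
  ga_scale kG (conj_sum G a) = conj_sum G b -> ga_scale kL (conj_sum L a) = b ->
  kG = kL * ((#|ga_cen G a|%:R / #|ga_cen L a|%:R)
             / (#|ga_cen G (conj_sum L a)|%:R / #|L|%:R)).
Proof.
move=> nz_b1 defG defL.
have nz_kL : kL != 0.
  by apply: contraNneq nz_b1 => kL0; rewrite -defL kL0 ga_scaleE mul0r.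
have nz_a1 : a 1%g != 0.
  by apply: contraNneq nz_b1 => a0; rewrite -defL ga_scaleE conj_sum1 a0 !mulr0.
have := congr1 (fun f : galg gT => f 1%g) defG; rewrite /= ga_scaleE !conj_sum1.
rewrite -defL ga_cenZ // ga_scaleE conj_sum1 => def_kG.
have nz_G : #|G|%:R != 0 :> algC by rewrite neq0CG.
have nz_L : #|L|%:R != 0 :> algC by rewrite neq0CG.
have nz_cGa := ga_cen_neq0 G a; have nz_cLa := ga_cen_neq0 L a.
have nz_cGLa := ga_cen_neq0 G (conj_sum L a).
apply: (mulIf (_ : #|G|%:R / #|ga_cen G a|%:R * a 1%g != 0)).
  by rewrite !mulf_neq0 ?invr_eq0.
by rewrite def_kG; field; rewrite nz_cGa nz_cLa nz_cGLa nz_L.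
Qed.

End GroupAlgebra.

Section GaloisConjugates.
Variables (gT : finGroupType) (M : {group gT}).
Implicit Types (chi phi rho : 'CF(M)).

Lemma decPP (P : Prop) : reflect P (Defs.decP P).
Proof.
rewrite /Defs.decP.
by case: ClassicalEpsilon.excluded_middle_informative => h; [left | right].
Qed.

Lemma gal_conjs_uniq chi : uniq (gal_conjs chi).
Proof.
apply/filter_uniq; rewrite -(map_tnth_enum (irr M)) map_inj_uniq ?enum_uniq //.
exact: irr_inj.
Qed.

Lemma mem_gal_conjs chi phi : chi \in irr M ->
  reflect (exists u : {rmorphism algC -> algC}, phi = cfAut u chi)
          (phi \in gal_conjs chi).
Proof.
move=> irr_chi; rewrite mem_filter; apply: (iffP andP) => [[/decPP] // | [u ->]].
by rewrite cfAut_irr irr_chi; split=> //; apply/decPP; exists u.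
Qed.

Lemma gal_conjs_irr chi phi : phi \in gal_conjs chi -> phi \in irr M.
Proof. by rewrite mem_filter => /andP[]. Qed.

Lemma gal_conjs_refl chi : chi \in irr M -> chi \in gal_conjs chi.
Proof.
move=> irr_chi; apply/mem_gal_conjs => //; exists idfun.
by apply/cfunP => x; rewrite cfunE.
Qed.

Lemma cfAut_gal_conjs chi u : chi \in irr M -> cfAut u chi \in gal_conjs chi.
Proof. by move=> irr_chi; apply/mem_gal_conjs => //; exists u. Qed.

Lemma gal_conjs1 chi phi :
  chi \in irr M -> phi \in gal_conjs chi -> phi 1%g = chi 1%g.
Proof.
move=> irr_chi /mem_gal_conjs-/(_ irr_chi) [u ->].
by have [i ->] := irrP irr_chi; apply: cfAut_irr1.
Qed.

Lemma gal_conjs_trans chi phi : chi \in irr M ->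
  phi \in gal_conjs chi -> gal_conjs phi =i gal_conjs chi.
Proof.
move=> irr_chi /mem_gal_conjs-/(_ irr_chi) [u ->] rho.
have irr_phi : cfAut u chi \in irr M by rewrite cfAut_irr.
apply/(mem_gal_conjs _ irr_phi)/(mem_gal_conjs _ irr_chi) => -[v ->].
  by exists (v \o u)%FUN; apply/cfunP => x; rewrite !cfunE.
exists (v \o algC_invaut u)%FUN.
by apply/cfunP => x; rewrite !cfunE /= algC_autK.
Qed.

Lemma gal_conjsJ chi y : chi \in irr M ->
  perm_eq (gal_conjs (chi ^ y)%CF) (map (cfConjg y) (gal_conjs chi)).
Proof.
move=> irr_chi; have irr_chiy := cfConjg_irr y irr_chi.
apply: uniq_perm; rewrite ?(map_inj_uniq (can_inj (cfConjgK y))) ?gal_conjs_uniq //.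
move=> rho; apply/mem_gal_conjs/mapP => // [[u ->] | [phi gal_phi ->]].
  by exists (cfAut u chi); rewrite ?cfAut_gal_conjs ?cfAutConjg.
have [u ->] := mem_gal_conjs phi irr_chi gal_phi.
by exists u; rewrite cfAutConjg.
Qed.

End GaloisConjugates.

Section CentralIdempotents.
Variables (gT : finGroupType) (M : {group gT}).
Implicit Types (chi phi rho : 'CF(M)) (g h x : gT).

Definition ga_idem phi : galg gT := [ffun g => phi 1%g / #|M|%:R * phi g^-1%g].

Lemma ga_idem_out phi g : g \notin M -> ga_idem phi g = 0.
Proof. by move=> notMg; rewrite ffunE [phi g^-1%g]cfun0 ?mulr0 ?groupV. Qed.

Lemma ga_idem_class phi x g : x \in M -> ga_idem phi (g ^ x)%g = ga_idem phi g.
Proof. by move=> Mx; rewrite !ffunE -conjVg cfunJ. Qed.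

Lemma ga_idemJ phi z :
  z \in 'N(M)%g -> ga_conj z (ga_idem phi) = ga_idem (phi ^ z^-1)%CF.
Proof.
move=> nMz; apply/ffunP => g.
by rewrite !ffunE cfConjg1 cfConjgE ?groupV // invgK conjVg.
Qed.

Lemma ga_idem_mul phi rho : phi \in irr M -> rho \in irr M ->
  ga_mul (ga_idem phi) (ga_idem rho) = if phi == rho then ga_idem phi else 0.
Proof.
move=> /irrP[i ->] /irrP[j ->]; rewrite (inj_eq irr_inj); apply/ffunP => g.
rewrite ffunE (bigID (mem M)) /= [X in _ + X]big1 ?addr0; last first.
  by move=> h /ga_idem_out->; rewrite mul0r.
have := generalized_orthogonality_relation g^-1%g j i.
have nz_M : #|M|%:R != 0 :> algC by rewrite neq0CG.
have -> : \sum_(h in M) ga_idem 'chi_i h * ga_idem 'chi_j (h^-1 * g)%g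
    = 'chi_i 1%g / #|M|%:R * ('chi_j 1%g / #|M|%:R)
      * \sum_(h in M) 'chi_j (h * g^-1)%g * 'chi_i h^-1%g.
  rewrite big_distrr; apply: eq_bigr => h Mh /=; rewrite !ffunE.
  have -> : ((h^-1 * g)^-1 = (h * g^-1) ^ h)%g.
    by rewrite invMg invgK /conjg !mulgA mulVg mul1g.
  by rewrite cfunJ //; ring.
move/(canRL (mulKf (invr_neq0 nz_M))) ->.
have [<- | ne_ij] := eqVneq i j; last by rewrite ffunE mul0r !mulr0.
rewrite ffunE invrK mul1r.
by field; rewrite nz_M irr1_neq0.
Qed.

Lemma ga_idem1_neq0 phi : phi \in irr M -> ga_idem phi 1%g != 0.
Proof.
by move=> /irrP[i ->]; rewrite ffunE invg1 !mulf_neq0 ?invr_eq0 ?neq0CG ?irr1_neq0.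
Qed.

Lemma eQ_sum_idem chi : chi \in irr M ->
  eQ chi = \sum_(phi <- gal_conjs chi) ga_idem phi.
Proof.
move=> irr_chi; apply/ffunP => g; rewrite ffunE sum_ffunE.
case: ifP => Mg; last by rewrite big1_seq // => phi _; rewrite ga_idem_out ?Mg.
rewrite big_distrr /=; apply: eq_big_seq => phi gal_phi.
by rewrite ffunE (gal_conjs1 irr_chi gal_phi).
Qed.

Lemma ga_idem_mul_eQ phi chi : phi \in irr M -> chi \in irr M ->
  ga_mul (ga_idem phi) (eQ chi) = if phi \in gal_conjs chi then ga_idem phi else 0.
Proof.
move=> irr_phi irr_chi; rewrite eQ_sum_idem // ga_mul_sumr.
rewrite (eq_big_seq (fun rho => if rho == phi then ga_idem phi else 0)); last first.
  by move=> rho /gal_conjs_irr irr_rho; rewrite ga_idem_mul // eq_sym.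
rewrite -big_mkcond /=; case: ifP => [gal_phi | /negbT gal'_phi].
  by rewrite -big_filter filter_pred1_uniq ?gal_conjs_uniq // big_seq1.
by rewrite big1_seq // => rho /andP[/eqP-> /(negP gal'_phi)].
Qed.

Lemma eQ_idem chi : chi \in irr M -> ga_mul (eQ chi) (eQ chi) = eQ chi.
Proof.
move=> irr_chi; rewrite {1}eQ_sum_idem // ga_mul_suml [RHS]eQ_sum_idem //.
apply: eq_big_seq => phi gal_phi.
by rewrite ga_idem_mul_eQ ?gal_phi ?(gal_conjs_irr gal_phi).
Qed.

Lemma eQ_out chi g : g \notin M -> eQ chi g = 0.
Proof. by move=> notMg; rewrite ffunE (negPf notMg). Qed.

Lemma eQ_class chi x g : chi \in irr M -> x \in M -> eQ chi (g ^ x)%g = eQ chi g.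
Proof.
move=> irr_chi Mx; rewrite eQ_sum_idem // !sum_ffunE.
by apply: eq_bigr => phi _; apply: ga_idem_class.
Qed.

Lemma eQ1_neq0 chi : chi \in irr M -> eQ chi 1%g != 0.
Proof.
move=> irr_chi; rewrite eQ_sum_idem // sum_ffunE.
rewrite big_seq (eq_bigr (fun _ => ga_idem chi 1%g)) -?big_seq; last first.
  by move=> phi gal_phi; rewrite !ffunE invg1 (gal_conjs1 irr_chi gal_phi).
rewrite big_const_seq count_predT iter_addr_0 -mulr_natl.
rewrite mulf_neq0 ?ga_idem1_neq0 // pnatr_eq0 -lt0n.
by have := gal_conjs_refl irr_chi; case: (gal_conjs chi).
Qed.

Lemma eQJ chi z : chi \in irr M -> z \in 'N(M)%g ->
  ga_conj z (eQ chi) = eQ (chi ^ z^-1)%CF.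
Proof.
move=> irr_chi nMz; rewrite !eQ_sum_idem ?cfConjg_irr // ga_conj_sum.
rewrite (perm_big _ (gal_conjsJ _ irr_chi)) big_map.
by apply: eq_bigr => phi _; apply: ga_idemJ.
Qed.

(* Galois classes of irreducible characters are equal or disjoint. *)
Lemma eQ_orth chi rho : chi \in irr M -> rho \in irr M -> eQ chi != eQ rho ->
  ga_mul (eQ chi) (eQ rho) = 0.
Proof.
move=> irr_chi irr_rho ne_eQ.
rewrite (eQ_sum_idem irr_chi) ga_mul_suml big1_seq // => phi /andP[_ gal_phi].
rewrite ga_idem_mul_eQ ?(gal_conjs_irr gal_phi) //.
case: ifP => // gal_rho_phi; case/eqP: ne_eQ.
rewrite !eQ_sum_idem //; apply/perm_big/uniq_perm; rewrite ?gal_conjs_uniq // => xi.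
by rewrite -(gal_conjs_trans irr_chi gal_phi) (gal_conjs_trans irr_rho gal_rho_phi).
Qed.

End CentralIdempotents.

Lemma char_add_irr (gT : finGroupType) (G : {group gT}) (a b : 'CF(G)) :
  a \is a character -> b \is a character -> a + b \in irr G -> a = 0 \/ b = 0.
Proof.
move=> Ca Cb; rewrite irrEchar => /andP[_].
rewrite cfnormD conj_natr ?Cnat_cfdot_char //.
have [na Ena] := natrP (Cnat_cfdot_char Ca Ca).
have [nb Enb] := natrP (Cnat_cfdot_char Cb Cb).
have [nab ->] := natrP (Cnat_cfdot_char Ca Cb).
rewrite Ena Enb -!natrD pnatr_eq1 => n1.
have [-> | nz_a] := eqVneq a 0; [by left | right].
rewrite -cfnorm_eq0 Ena pnatr_eq0 in nz_a.
apply/eqP; rewrite -cfnorm_eq0 Enb pnatr_eq0.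
move: nz_a n1 {Ena}; case: na => // n _.
by rewrite addSn eqSS !addn_eq0 => /andP[/andP[_ ->]].
Qed.

Lemma irr_of_cfInd_irr (gT : finGroupType) (G M : {group gT}) (theta : 'CF(M)) :
  M \subset G -> theta \is a character -> 'Ind[G] theta \in irr G ->
  theta \in irr M.
Proof.
move=> sMG Ctheta irr_Ind.
have nz_theta : theta != 0.
  apply: contraTneq irr_Ind => ->; rewrite raddf0.
  by apply/negP => /irrP[i /esym/eqP]; rewrite (negPf (irr_neq0 i)).
have [i /(constt_charP i Ctheta)[rho Crho def_theta]] := neq0_has_constt nz_theta.
rewrite def_theta raddfD in irr_Ind.
have [/eqP | /eqP] :=
  char_add_irr (cfInd_char G (irr_char i)) (cfInd_char G Crho) irr_Ind.
  by rewrite (negPf (Ind_irr_neq0 i sMG)).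
by rewrite cfInd_eq0 // def_theta => /eqP->; rewrite addr0 mem_irr.
Qed.

Section InducedRationalIdempotent.
Variables (gT : finGroupType) (G M : {group gT}) (theta : 'CF(M)).
Hypotheses (sMG : M \subset G) (irr_theta : theta \in irr M).

Local Notation S := (conj_sum G (eQ theta)).

Lemma sum_ga_conj_ga_idem (phi : 'CF(M)) :
  \sum_(y in G) ga_conj y (ga_idem phi) = ga_scale #|M|%:R (ga_idem ('Ind[G] phi)).
Proof.
apply/ffunP => g; rewrite sum_ffunE !ffunE cfInd1 // cfIndE //.
under eq_bigr do rewrite !ffunE -conjVg.
rewrite -big_distrr /=.
have nz_M : #|M|%:R != 0 :> algC by rewrite neq0CG.
have nz_GM : #|G : M|%g%:R != 0 :> algC by rewrite pnatr_eq0 -lt0n indexg_gt0.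
by rewrite -(Lagrange sMG) natrM; field; rewrite nz_M nz_GM.
Qed.

Lemma sum_ga_conj_eQ :
  \sum_(y in G) ga_conj y (eQ theta)
    = \sum_(phi <- gal_conjs theta) ga_scale #|M|%:R (ga_idem ('Ind[G] phi)).
Proof.
under eq_bigr do rewrite eQ_sum_idem // ga_conj_sum.
by rewrite exchange_big /=; apply: eq_bigr => phi _; apply: sum_ga_conj_ga_idem.
Qed.

Lemma cfInd_gal_conjs (phi : 'CF(M)) : 'Ind[G] theta \in irr G ->
  phi \in gal_conjs theta -> 'Ind[G] phi \in gal_conjs ('Ind[G] theta).
Proof.
move=> irr_Ind /mem_gal_conjs-/(_ irr_theta)[u ->].
by rewrite -cfAutInd cfAut_gal_conjs.
Qed.

Hypotheses (irr_Ind : 'Ind[G] theta \in irr G) (idem_S : ga_mul S S = S).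

Lemma eQ_Ind_mul_conj_sum : ga_mul (eQ ('Ind[G] theta)) S = S.
Proof.
apply: (ga_scale_inj (ga_cen_neq0 G (eQ theta))).
rewrite -ga_mulZr -sum_ga_conj sum_ga_conj_eQ ga_mul_sumr.
apply: eq_big_seq => phi gal_phi; rewrite ga_mulZr.
have gal_Ind := cfInd_gal_conjs irr_Ind gal_phi.
rewrite (@ga_mul_comm _ G) ?ga_idem_mul_eQ ?gal_Ind ?(gal_conjs_irr gal_Ind) //.
  by move=> x g Gx; apply: eQ_class.
by move=> g; apply: ga_idem_out.
Qed.

(* Averaging over [G] makes [S] a combination of the [ga_idem chi] with
   positive coefficients; idempotency of [S] forces them all to be 1. *)
Lemma ga_idem_mul_conj_sum (chi : 'CF(G)) :
  chi \in gal_conjs ('Ind[G] theta) -> ga_mul (ga_idem chi) S = ga_idem chi.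
Proof.
move=> gal_chi; have irr_chi := gal_conjs_irr gal_chi.
set n := count (fun phi => chi == 'Ind[G] phi) (gal_conjs theta).
pose c : algC := #|ga_cen G (eQ theta)|%:R; have nz_c : c != 0 := ga_cen_neq0 G _.
have chiS : ga_mul (ga_idem chi) S = ga_scale (#|M|%:R * n%:R / c) (ga_idem chi).
  apply: (ga_scale_inj nz_c); rewrite ga_scaleA mulrC divfK //.
  rewrite -ga_mulZr -sum_ga_conj sum_ga_conj_eQ ga_mul_sumr.
  rewrite (eq_big_seq (fun phi => ga_scale #|M|%:R
             (if chi == 'Ind[G] phi then ga_idem chi else 0))); last first.
    move=> phi gal_phi; rewrite ga_mulZr ga_idem_mul //.
    exact: gal_conjs_irr (cfInd_gal_conjs irr_Ind gal_phi).
  rewrite -ga_scale_sum -big_mkcond big_const_seq iter_addr_0.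
  by rewrite ga_scale_nat ga_scaleA.
have n_gt0 : (0 < n)%N.
  rewrite -has_count; have [u ->] := mem_gal_conjs _ irr_Ind gal_chi.
  by apply/hasP; exists (cfAut u theta); rewrite ?cfAut_gal_conjs ?cfAutInd.
rewrite chiS (ga_mul_idem_scale_eq1 _ idem_S _ _ _ chiS) ?ga_scale1 //.
- by rewrite ga_idem_mul // eqxx.
- apply/esym/(@ga_mul_comm _ G) => [x g Gx | g]; first exact: ga_idem_class.
  by apply: conj_sum_out => h notGh; rewrite eQ_out // (contra (subsetP sMG h)).
- by apply: contraNneq (ga_idem1_neq0 irr_chi) => ->; rewrite ffunE.
- by rewrite !mulf_neq0 ?invr_eq0 ?neq0CG // pnatr_eq0 -lt0n.
Qed.

Lemma eQ_cfInd_conj_sum : eQ ('Ind[G] theta) = S.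
Proof.
rewrite -[RHS]eQ_Ind_mul_conj_sum [in RHS](eQ_sum_idem irr_Ind) ga_mul_suml.
rewrite [LHS]eQ_sum_idem //; apply: eq_big_seq => chi gal_chi.
by rewrite ga_idem_mul_conj_sum.
Qed.

End InducedRationalIdempotent.

Section InvariantRestriction.
Variables (gT : finGroupType) (G H A L : {group gT}) (psi : 'CF(H)).
Hypotheses (lin_psi : psi \is a linear_char) (nAG : (A <| G)%g) (sAH : A \subset H)
  (sHL : H \subset L) (sLG : L \subset G)
  (inv_psiA : forall x a, x \in L -> a \in A ->
                'Res[A] psi (a ^ x)%g = 'Res[A] psi a)
  (nLN : (L <| 'N_G(cfker ('Res[A] psi)))%g).

Local Notation theta := ('Ind[L] psi).
Local Notation kerA := (cfker ('Res[A] psi)).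

Lemma memJ_A a x : a \in A -> x \in G -> (a ^ x)%g \in A.
Proof. by move=> Aa Gx; rewrite memJ_norm // (subsetP (normal_norm nAG)). Qed.

Lemma psiJ_A x a : x \in L -> a \in A -> psi (a ^ x)%g = psi a.
Proof.
move=> Lx Aa; have Aax := memJ_A Aa (subsetP sLG x Lx).
by rewrite -(cfResE psi sAH Aa) -(cfResE psi sAH Aax) inv_psiA.
Qed.

Lemma mem_kerA a : a \in A -> (a \in kerA) = (psi a == 1).
Proof.
move=> Aa; rewrite cfkerEchar ?cfRes_char ?lin_charW // inE Aa.
by rewrite !cfResE // lin_char1.
Qed.

Lemma theta_mull a y : a \in A -> theta (a * y)%g = psi a * theta y.
Proof.
move=> Aa; rewrite !cfIndE // [RHS]mulrCA; congr (_ * _); rewrite big_distrr /=.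
apply: eq_bigr => x Lx; rewrite conjMg.
have Hax : (a ^ x)%g \in H by rewrite (subsetP sAH) ?memJ_A ?(subsetP sLG).
have [Hyx | notHyx] := boolP ((y ^ x)%g \in H).
  by rewrite lin_charM // psiJ_A.
by rewrite (cfun0 _ notHyx) cfun0 ?mulr0 // groupMl.
Qed.

Lemma theta_mulr a y : a \in A -> theta (y * a)%g = psi a * theta y.
Proof.
move=> Aa; have -> : (y * a = (a * y) ^ a)%g by rewrite conjgE -mulgA mulKg.
by rewrite cfunJ ?theta_mull // (subsetP sHL) ?(subsetP sAH).
Qed.

Lemma gal_conjs_theta_mul phi : theta \in irr L -> phi \in gal_conjs theta ->
  exists u : {rmorphism algC -> algC}, forall a y, a \in A ->
    phi (a * y)%g = u (psi a) * phi y /\ phi (y * a)%g = u (psi a) * phi y.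
Proof.
move=> irr_theta /mem_gal_conjs-/(_ irr_theta)[u ->]; exists u => a y Aa.
by rewrite !cfunE theta_mull // theta_mulr // rmorphM.
Qed.

(* With [a \in kerA] and [a ^ z \notin kerA], translating the summation
   variable by [a] multiplies the product by a Galois conjugate of
   [psi (a ^ z)], which is not 1. *)
Lemma ga_idem_mul_conj_notN phi rho z : theta \in irr L ->
  phi \in gal_conjs theta -> rho \in gal_conjs theta ->
  z \in G -> z \notin 'N(kerA)%g ->
  ga_mul (ga_idem phi) (ga_conj z (ga_idem rho)) = 0.
Proof.
move=> irr_theta gal_phi gal_rho Gz notNz.
have [a ker_a ker'_az] : exists2 a, a \in kerA & (a ^ z)%g \notin kerA.
  have /subsetPn[b ker_bz ker'_b] : ~~ (kerA :^ z \subset kerA)%g.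
    apply: contra notNz => sub.
    by apply/normP/eqP; rewrite eqEcard sub cardJg leqnn.
  by exists (b ^ z^-1)%g; rewrite -?mem_conjg ?conjgKV.
have Aa : a \in A := subsetP (cfker_sub _) a ker_a.
have Aaz : (a ^ z)%g \in A := memJ_A Aa Gz.
have psi_a' : psi a^-1%g = 1 by apply/eqP; rewrite -mem_kerA ?groupV.
have [u phiA] := gal_conjs_theta_mul irr_theta gal_phi.
have [v rhoA] := gal_conjs_theta_mul irr_theta gal_rho.
apply/ffunP => g; rewrite !ffunE; set s := \sum_h _.
have def_s : s = v (psi (a ^ z)%g) * s.
  rewrite {1}/s (reindex_inj (mulIg a)) /= /s big_distrr; apply: eq_bigr => h _ /=.
  rewrite !ffunE invMg (phiA a^-1%g h^-1%g (groupVr Aa)).1 psi_a' rmorph1 mul1r.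
  have -> : ((a^-1 * h^-1 * g) ^ z)^-1%g = (((h^-1 * g) ^ z)^-1 * a ^ z)%g.
    by rewrite -mulgA conjMg invMg conjVg invgK.
  by rewrite (rhoA _ _ Aaz).2; ring.
have /eqP : (1 - v (psi (a ^ z)%g)) * s = 0 by rewrite mulrBl mul1r -def_s subrr.
by rewrite mulf_eq0 subr_eq0 eq_sym fmorph_eq1 -mem_kerA // (negPf ker'_az) => /eqP.
Qed.

Lemma eQ_mul_conj_notN z : theta \in irr L -> z \in G -> z \notin 'N(kerA)%g ->
  ga_mul (eQ theta) (ga_conj z (eQ theta)) = 0.
Proof.
move=> irr_theta Gz notNz; rewrite !eQ_sum_idem // ga_conj_sum ga_mul_suml.
rewrite big1_seq // => phi /andP[_ gal_phi]; rewrite ga_mul_sumr.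
by rewrite big1_seq // => rho /andP[_ gal_rho]; apply: ga_idem_mul_conj_notN.
Qed.

Lemma eQ_conj_orth : theta \in irr L ->
  forall x y, x \in G -> y \in G -> ga_conj x (eQ theta) != ga_conj y (eQ theta) ->
    ga_mul (ga_conj x (eQ theta)) (ga_conj y (eQ theta)) = 0.
Proof.
move=> irr_theta x y Gx Gy ne_xy; pose z := (x^-1 * y)%g.
have Gz : z \in G by rewrite groupM ?groupV.
have def_y : y = (x * z)%g by rewrite mulKVg.
rewrite def_y -ga_conjM -ga_conj_mul.
suff -> : ga_mul (eQ theta) (ga_conj z (eQ theta)) = 0.
  by apply/ffunP => g; rewrite !ffunE.
have [Nz | notNz] := boolP (z \in 'N(kerA)%g); last exact: eQ_mul_conj_notN.
have nLz : z \in 'N(L)%g by rewrite (subsetP (normal_norm nLN)) // inE Gz.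
rewrite eQJ // eQ_orth ?cfConjg_irr // -eQJ //.
by apply: contra ne_xy => /eqP ez; rewrite def_y -ga_conjM -ez.
Qed.

End InvariantRestriction.

Theorem proposition2 (gT : finGroupType) (G H K A L : {group gT})
  (psi : 'CF(H))
  (sHG : H \subset G) (nKH : (K <| H)%g) (cycHK : cyclic (H / K)%g)
  (lin_psi : psi \is a linear_char) (ker_psi : cfker psi = K)
  (nAG : (A <| G)%g) (sAH : A \subset H) (sHL : H \subset L) (sLG : L \subset G)
  (inv_psiA : forall x a, x \in L -> a \in A ->
                'Res[A] psi (a ^ x)%g = 'Res[A] psi a)
  (nLN : (L <| 'N_G(cfker ('Res[A] psi)))%g) :
  ('Ind[L] psi \in irr L ->
     forall x y, x \in G -> y \in G ->
       ga_conj x (eQ ('Ind[L] psi)) != ga_conj y (eQ ('Ind[L] psi)) ->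
       ga_mul (ga_conj x (eQ ('Ind[L] psi))) (ga_conj y (eQ ('Ind[L] psi)))
         = 0)
  /\
  ('Ind[G] psi \in irr G ->
     eQ ('Ind[G] psi) = conj_sum G (eQ ('Ind[L] psi))
     /\
     forall alphaG alphaL : rat,
       ga_scale (ratr alphaG) (eMHK G H K) = eQ ('Ind[G] psi) ->
       ga_scale (ratr alphaL) (eMHK L H K) = eQ ('Ind[L] psi) ->
       ratr alphaG = ratr alphaL *
         ((#|ga_cen G (eps H K)|%:R / #|ga_cen L (eps H K)|%:R)
          / (#|ga_cen G (eMHK L H K)|%:R / #|L|%:R)) :> algC).
Proof.
have orth := eQ_conj_orth lin_psi nAG sAH sHL sLG inv_psiA nLN.
have irr_theta : 'Ind[G] psi \in irr G -> 'Ind[L] psi \in irr L.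
  move=> irr_chi; apply: (irr_of_cfInd_irr sLG (cfInd_char L (lin_charW lin_psi))).
  by rewrite cfIndInd.
have eQ_Ind : 'Ind[G] psi \in irr G ->
    eQ ('Ind[G] psi) = conj_sum G (eQ ('Ind[L] psi)).
  move=> irr_chi; have irr_th := irr_theta irr_chi.
  rewrite -(cfIndInd psi sLG sHL) eQ_cfInd_conj_sum ?cfIndInd //.
  by apply: conj_sum_idem; [apply: eQ_idem | apply: orth].
split=> // irr_chi; split; first exact: eQ_Ind.
move=> alphaG alphaL defG defL.
apply: (conj_sum_scale_ratio (eQ1_neq0 (irr_theta irr_chi))) defL.
by rewrite -eQ_Ind.
Qed.
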